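(* Let $d,e,r\geq 2$ be integers, and let $S(d,e,r)$ be the smallest set of positive integers such that (a) $r\in S$; (b) $n\in S$ whenever $n^e\in S$; (c) $(n+d)^e\in S$ whenever $n\in S$. Then $$S(d,e,r)=\{n\geq 2 : n\not\equiv 0 \pmod d\}$$ if and only if all of the following hold: (1) $d=p$ is prime; (2) $r\not\equiv 0\pmod p$; (3) $e$ is a multiple of the radical of $p-1$, i.e. if $p-1=p_1^{n_1}\cdots p_k^{n_k}$ with distinct primes $p_i$ and $n_i\geq 1$, then $p_1p_2\cdots p_k \mid e$.
   Context: ''Smallest'' means contained in every set of positive integers satisfying (a), (b), (c). The set $S(d,e,r)$ is called a maximal solution when it equals $\{n\geq 2 : n\not\equiv 0 \pmod d\}$. *)

From mathcomp Require Import all_boot.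
Set Implicit Arguments. Unset Strict Implicit. Unset Printing Implicit Defensive.

Definition S_closed (d e r : nat) (T : nat -> Prop) : Prop :=
  (forall n, T n -> 0 < n) /\
  T r /\
  (forall n, 0 < n -> T (n ^ e) -> T n) /\
  (forall n, T n -> T ((n + d) ^ e)).

Definition S_set (d e r : nat) (n : nat) : Prop :=
  forall T : nat -> Prop, S_closed d e r T -> T n.

(* Radical of n: product of the distinct primes dividing n (rad 1 = 1). *)
Definition rad (n : nat) : nat := \prod_(q <- primes n) q.

From mathcomp Require Import all_boot ssralg poly zmodp cyclic zify.
Set Implicit Arguments. Unset Strict Implicit. Unset Printing Implicit Defensive.
Import GRing.Theory.

(* Write S for S(d,e,r). Every f with f (n ^ e) = f n and f (n + d) = f n is
   constant on S. When S is maximal it contains 1 + d, so such an f equals f 1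
   at every n >= 2 prime to d. For f = (q %| _), with q a prime factor q < d of
   a composite d, this forces q %| 1; for f n = [n ^ ((p-1)/l) = 1 mod p], with
   l a prime factor of p - 1 not dividing e, it gives X^((p-1)/l) - 1 all the
   p - 1 nonzero residues as roots.
   Conversely, if d = p is prime and rad (p-1) %| e, then p - 1 %| e ^ j for j
   large, so n ^ (e ^ j) = 1 mod p for every n prime to p (Fermat). The iterate
   m of n |-> (n + p) ^ e from r is in S and = 1 mod p; since S is closed under
   n |-> n + p (shift, then take an e-th root), the larger n ^ (e ^ j) is in S
   too, and taking e-th roots j times gives n. *)

Lemma Fermat_expn p x k : prime p -> ~~ (p %| x) -> p.-1 %| k -> x ^ k = 1 %[mod p].
Proof.
move=> p_pr p_x /dvdnP [c ->].
have := @Euler_exp_totient x p; rewrite totient_prime // coprime_sym prime_coprime //.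
by move=> /(_ p_x) x_pm1; rewrite mulnC expnM -modnXm x_pm1 modnXm exp1n.
Qed.

Lemma coprime_expn_eq1_mod n l e y : coprime e l -> y ^ l = 1 %[mod n] ->
  (y ^ e == 1 %[mod n]) = (y == 1 %[mod n]).
Proof.
move=> co_el y_l; apply/idP/idP => [/eqP y_e | /eqP y1]; last first.
  by rewrite -modnXm y1 modnXm exp1n.
have [e0 | e_gt0] := posnP e.
  by move: co_el; rewrite e0 /coprime gcd0n => /eqP l1; rewrite -y_l l1 expn1.
have [a _] := Bezoutl l e_gt0; rewrite (eqP co_el) => /dvdnP [k Dk].
have : y * (y ^ l) ^ a = (y ^ e) ^ k by rewrite -!expnM -expnS -add1n mulnC Dk mulnC.
move/(congr1 (modn^~ n)); rewrite -modnMm -modnXm y_l modnXm exp1n.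
by rewrite -modnXm y_e modnXm exp1n modnMm muln1 => ->.
Qed.

Lemma pow_eq1_mod_prime_expn p l e m n : prime p -> prime l -> m * l = p.-1 ->
  ~~ (l %| e) -> ((n ^ e) ^ m == 1 %[mod p]) = (n ^ m == 1 %[mod p]).
Proof.
move=> p_pr l_pr Dp l_e.
have m_gt0 : 0 < m by have := prime_gt1 p_pr; nia.
rewrite expnAC; have [p_n | p'n] := boolP (p %| n).
  have p_nm k : 0 < k -> n ^ k = 0 %[mod p].
    by move=> k_gt0; apply/eqP; rewrite mod0n -/(dvdn p _) Euclid_dvdX // p_n.
  have e_gt0 : 0 < e by case: e l_e; rewrite ?dvdn0.
  rewrite -expnM !p_nm ?muln_gt0 ?m_gt0 ?e_gt0 // mod0n modn_small ?prime_gt1 //.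
apply: (coprime_expn_eq1_mod (l := l)); first by rewrite coprime_sym prime_coprime.
by rewrite -expnM Dp; apply: Fermat_expn.
Qed.

Lemma roots_of_unity_mod_prime_leq p m : prime p -> 0 < m ->
  (forall n, 0 < n < p -> n ^ m = 1 %[mod p]) -> p.-1 <= m.
Proof.
move=> p_pr m_gt0 n_m.
pose rs : seq 'F_p := [seq i%:R | i <- iota 1 p.-1]%R.
have rs_uniq : uniq rs.
  rewrite map_inj_in_uniq ?iota_uniq // => i j; rewrite !mem_iota => i_lt j_lt.
  move/(congr1 (@nat_of_ord _)); rewrite !val_Fp_nat // !modn_small //; lia.
have rs_roots : all (root ('X^m - 1)) rs.
  apply/allP => _ /mapP [i + ->]; rewrite mem_iota => i_lt.
  by rewrite rootE !hornerE -natrX -Fp_nat_mod // n_m ?Fp_nat_mod ?subrr //; lia.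
have := max_poly_roots _ rs_roots rs_uniq.
by rewrite -size_poly_eq0 size_Xn_sub_1 // size_map size_iota; apply.
Qed.

Lemma rad_dvdnP n e : reflect {in primes n, forall q, q %| e} (rad n %| e).
Proof.
apply: (iffP idP) => [rad_e q q_n | q_e].
  by apply: dvdn_trans rad_e; rewrite /rad (big_rem q q_n) dvdn_mulr.
have : all prime (primes n) by apply/allP => q; rewrite mem_primes => /andP[].
rewrite /rad.
elim: (primes n) (primes_uniq n) q_e => [|q s IHs] /=; first by rewrite big_nil.
move=> /andP[q's s_uniq] q_e /andP[q_pr s_pr].
rewrite big_cons Gauss_dvd.
  rewrite q_e ?mem_head ?IHs // => q' q'_s.
  by rewrite q_e // inE q'_s orbT.
rewrite prime_coprime // Euclid_dvd_prod // big_has; apply/hasPn => q' q'_s /=.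
by rewrite dvdn_prime2 ?(allP s_pr q' q'_s) //; apply: contraNneq q's => ->.
Qed.

Lemma dvdn_exp_of_primes n e : 0 < n -> {in primes n, forall q, q %| e} -> n %| e ^ n.
Proof.
move=> n_gt0 q_e; apply/dvdn_partP => // q q_n; rewrite p_part.
exact: dvdn_trans (dvdn_exp2l _ (ltnW (ltn_logl q n_gt0))) (dvdn_exp2r _ (q_e q q_n)).
Qed.

Lemma iter_shift_expn_mod d e r k :
  iter k (fun n => (n + d) ^ e) r = r ^ (e ^ k) %[mod d].
Proof.
elim: k => [|k IHk] /=; first by rewrite expn1.
by rewrite -modnXm modnDr modnXm -modnXm IHk modnXm -expnM -expnSr.
Qed.

Section Closure.

Variables d e r : nat.

Lemma S_set_r : S_set d e r r.
Proof. by move=> T [_ []]. Qed.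

Lemma S_set_root n : 0 < n -> S_set d e r (n ^ e) -> S_set d e r n.
Proof.
move=> n_gt0 S_ne T T_cl; case: (T_cl) => _ [_ [T_root _]].
exact: T_root n_gt0 (S_ne T T_cl).
Qed.

Lemma S_set_shift n : S_set d e r n -> S_set d e r ((n + d) ^ e).
Proof.
move=> S_n T T_cl; case: (T_cl) => _ [_ [_ T_shift]].
exact: T_shift _ (S_n T T_cl).
Qed.

Lemma S_set_ind (P : nat -> Prop) : 0 < r -> P r ->
    (forall n, 0 < n -> P (n ^ e) -> P n) -> (forall n, P n -> P ((n + d) ^ e)) ->
  forall n, S_set d e r n -> P n.
Proof.
move=> r_gt0 Pr P_root P_shift n /(_ (fun n => 0 < n /\ P n)) [] //.
split; first by move=> ? [].
split; first by [].
split; first by move=> m m_gt0 [_ /(P_root _ m_gt0)].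
by move=> m [m_gt0 /P_shift]; rewrite expn_gt0 addn_gt0 m_gt0.
Qed.

Lemma S_set_invariant (T : Type) (f : nat -> T) : 0 < r ->
    (forall n, f (n ^ e) = f n) -> (forall n, f (n + d) = f n) ->
  forall n, S_set d e r n -> f n = f r.
Proof.
move=> r_gt0 f_root f_shift; apply: S_set_ind => // n; first by rewrite f_root.
by rewrite f_root f_shift.
Qed.

Lemma S_set_root_iter j n : 0 < n -> S_set d e r (n ^ (e ^ j)) -> S_set d e r n.
Proof.
move=> n_gt0; elim: j => [|j IHj]; first by rewrite expn1.
rewrite expnSr expnM => S_nej; apply: IHj; apply: S_set_root S_nej.
by rewrite expn_gt0 n_gt0.
Qed.

Lemma S_set_iter k : S_set d e r (iter k (fun n => (n + d) ^ e) r).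
Proof. by elim: k => [|k IHk] /=; [exact: S_set_r | exact: S_set_shift]. Qed.

Hypothesis d_gt0 : 0 < d.

Lemma S_set_addn n : S_set d e r n -> S_set d e r (n + d).
Proof. by move/S_set_shift; apply: S_set_root; rewrite addn_gt0 d_gt0 orbT. Qed.

Lemma S_set_mod m n : S_set d e r m -> m <= n -> n = m %[mod d] -> S_set d e r n.
Proof.
move=> S_m le_mn /eqP; rewrite eqn_mod_dvd // => /dvdnP [k Dk].
rewrite -(subnKC le_mn) Dk {Dk le_mn}; elim: k => [|k IHk]; first by rewrite addn0.
by rewrite mulSn addnCA addnC; apply: S_set_addn.
Qed.

End Closure.

Definition maximal_solution d e r :=
  forall n, S_set d e r n <-> 2 <= n /\ ~~ (d %| n).

Lemma S_set_sub_maximal p e r : prime p -> 0 < e -> 1 < r -> ~~ (p %| r) ->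
  forall n, S_set p e r n -> 1 < n /\ ~~ (p %| n).
Proof.
move=> p_pr e_gt0 r_gt1 p'r; apply: S_set_ind => [|//|n n_gt0 []|n []].
- exact: ltnW.
- rewrite -[X in X < _](exp1n e) ltn_exp2r // Euclid_dvdX // e_gt0 andbT.
  by move=> n_gt1 p'n; split.
- move=> n_gt1 p'n; rewrite -[X in X < _](exp1n e) ltn_exp2r // ltn_addr //.
  by rewrite Euclid_dvdX // e_gt0 andbT dvdn_addl.
Qed.

Lemma maximal_sub_S_set p e r : prime p -> 1 < e -> ~~ (p %| r) -> rad p.-1 %| e ->
  forall n, 1 < n -> ~~ (p %| n) -> S_set p e r n.
Proof.
move=> p_pr e_gt1 p'r /rad_dvdnP rad_e n n_gt1 p'n.
have p1_e : p.-1 %| e ^ p.-1.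
  by apply: dvdn_exp_of_primes => //; have := prime_gt1 p_pr; lia.
set m := iter p.-1 (fun n => (n + p) ^ e) r.
have m_1 : m = 1 %[mod p] by rewrite iter_shift_expn_mod Fermat_expn.
set j := p.-1 + m.
have p1_ej : p.-1 %| e ^ j by rewrite expnD dvdn_mulr.
apply: (S_set_root_iter (j := j)); first exact: ltnW.
apply: (S_set_mod (prime_gt0 p_pr) (S_set_iter p.-1)).
  apply: leq_trans (leq_addl p.-1 m) (ltnW (ltn_trans (ltn_expl j e_gt1) _)).
  exact: ltn_expl.
by rewrite m_1 Fermat_expn.
Qed.

Section Necessity.

Variables d e r : nat.
Hypotheses (d_gt1 : 1 < d) (maxS : maximal_solution d e r).

Lemma maximal_solution_invariant (T : Type) (f : nat -> T) :
    (forall n, f (n ^ e) = f n) -> (forall n, f (n + d) = f n) ->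
  forall n, 1 < n -> ~~ (d %| n) -> f n = f 1.
Proof.
move=> f_root f_shift.
have [r_gt1 _] := (maxS r).1 (@S_set_r d e r).
have f_S := S_set_invariant (ltnW r_gt1) f_root f_shift.
move=> n n_gt1 d'n; rewrite f_S; last exact/maxS.
rewrite -(f_S (1 + d)) ?f_shift //; apply/maxS.
by split; [rewrite add1n ltnS ltnW | rewrite dvdn_addl // dvdn1 gtn_eqF].
Qed.

Lemma maximal_solution_prime : 0 < e -> prime d.
Proof.
move=> e_gt0; apply: contraT => d'pr.
have q_pr : prime (pdiv d) := pdiv_prime d_gt1.
have q_lt_d : pdiv d < d.
  by rewrite ltn_neqAle pdiv_leq 1?ltnW // andbT; apply: contraNneq d'pr => <-.
have q_root n : (pdiv d %| n ^ e) = (pdiv d %| n) by rewrite Euclid_dvdX // e_gt0 andbT.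
have q_shift n : (pdiv d %| n + d) = (pdiv d %| n) by rewrite dvdn_addl // pdiv_dvd.
have := maximal_solution_invariant q_root q_shift (prime_gt1 q_pr).
rewrite gtnNdvd ?prime_gt0 // dvdnn dvdn1 => /(_ isT) /esym/eqP q1.
by have := prime_gt1 q_pr; rewrite q1.
Qed.

Lemma maximal_solution_rad : prime d -> rad d.-1 %| e.
Proof.
move=> d_pr; apply/rad_dvdnP => l; rewrite mem_primes => /and3P [l_pr _ l_d1].
apply: contraT => l'e; set m := d.-1 %/ l.
have Dd1 : m * l = d.-1 := divnK l_d1.
have l_gt1 := prime_gt1 l_pr.
have m_gt0 : 0 < m by nia.
have : d.-1 <= m; last by nia.
apply: roots_of_unity_mod_prime_leq => // n /andP [n_gt0 n_lt_d].
have m_root n' : ((n' ^ e) ^ m == 1 %[mod d]) = (n' ^ m == 1 %[mod d]).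
  exact: pow_eq1_mod_prime_expn Dd1 l'e.
have m_shift n' : ((n' + d) ^ m == 1 %[mod d]) = (n' ^ m == 1 %[mod d]).
  by rewrite -modnXm modnDr modnXm.
have [-> | n_gt1] : n = 1 \/ 1 < n by lia.
  by rewrite exp1n.
apply/eqP; rewrite (maximal_solution_invariant m_root m_shift n_gt1) ?exp1n //.
by rewrite gtnNdvd.
Qed.

End Necessity.

Theorem theorem17 (d e r : nat) (hd : 2 <= d) (he : 2 <= e) (hr : 2 <= r) :
  (forall n : nat, S_set d e r n <-> (2 <= n /\ ~~ (d %| n))) <->
  [/\ prime d, ~~ (d %| r) & rad d.-1 %| e].
Proof.
have e_gt0 : 0 < e := ltnW he.
rewrite -/(maximal_solution d e r); split => [maxS | [d_pr d'r rad_e] n].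
  have d_pr := maximal_solution_prime hd maxS e_gt0.
  split => //; last exact: maximal_solution_rad maxS d_pr.
  by have [] := (maxS r).1 (@S_set_r d e r).
split; first exact: S_set_sub_maximal.
by case; apply: maximal_sub_S_set.
Qed.
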